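(* Let $p\geq 2$ and let $T$ be the (geometric realization of the) regular rooted tree in which the root has valence $p$ and every other vertex has valence $p+1$, equipped with its usual topology. Let $\mathcal{D}_T$ be the embedded wire diffeology on $T$. Then the D-topology of the diffeological space $(T,\mathcal{D}_T)$ coincides with the usual topology of $T$.
   Context: Fix a finite alphabet $A$ with $|A|=p\geq 2$. The vertices of $T$ are the finite words over $A$ (the root is the empty word); two vertices are joined by an edge iff they have the form $a_1\dots a_n$ and $a_1\dots a_na_{n+1}$. As a topological space, $T$ is the 1-dimensional CW complex obtained by realizing each edge as a copy of $[0,1]$ glued at its endpoint vertices, with its usual (CW) topology. A diffeology on a set $X$ is a collection of maps $U\to X$ (''plots''), $U$ ranging over open subsets of all $\mathbb{R}^n$, containing all constant maps, closed under precomposition with smooth maps between open subsets of Euclidean spaces, and satisfying the sheaf condition (a map that is locally a plot is a plot). The diffeology generated by a set $\mathcal{A}$ of maps into $X$ is the smallest diffeology containing $\mathcal{A}$; its plots are the maps $f:V\to X$ such that $V$ has an open cover on each member of which $f$ is either constant or factors as $g\circ h$ with $g\in\mathcal{A}$ and $h$ smooth. The embedded wire diffeology $\mathcal{D}_T$ is the diffeology on $T$ generated by all maps $\gamma:\mathbb{R}\to T$ that are injective, continuous, and homeomorphisms onto their images. The D-topology of a diffeological space $X$ is the topology in which $S\subseteq X$ is open iff $P^{-1}(S)$ is open for every plot $P$ of $X$. *)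

From HB Require Import structures.
From mathcomp Require Import all_boot all_order all_algebra.
From mathcomp Require Import all_classical all_reals all_analysis.
Set Implicit Arguments. Unset Strict Implicit. Unset Printing Implicit Defensive.
Import Order.TTheory GRing.Theory Num.Theory.
Import numFieldNormedType.Exports.
Local Open Scope classical_set_scope.
Local Open Scope ring_scope.

Section Tree.
Variables (R : realType) (A : finType).

(* Raw points of the geometric realization of the rooted tree over A.
   [Root] is the root vertex; [Pt w a t] (0 < t <= 1) is the point at
   parameter t on the edge joining the vertex w to the vertex rcons w a
   (t = 1 is the vertex rcons w a).  Each point has exactly one such
   representation. *)
Inductive tpt := Root | Pt of seq A & A & R.

Definition tvalid (x : tpt) : bool :=
  match x with Root => true | Pt _ _ t => (0 < t) && (t <= 1) end.

Definition tree := {x : tpt | tvalid x}.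

Definition troot : tree := exist (fun x => tvalid x) Root isT.

Definition tvertex (w : seq A) : tree :=
  match rev w with
  | [::] => troot
  | b :: ru => insubd troot (Pt (rev ru) b 1)
  end.

(* characteristic map [0,1] -> T of the edge from w to rcons w a
   (values outside [0,1] are irrelevant) *)
Definition edge_map (w : seq A) (a : A) (t : R) : tree :=
  if 0 < t then insubd (tvertex (rcons w a)) (Pt w a t) else tvertex w.

(* The usual (CW / weak) topology of T: U is open iff its preimage under
   each characteristic map of a closed edge is open in [0,1]. *)
Definition tree_open (U : set tree) : Prop :=
  forall (w : seq A) (a : A) (s : R), 0 <= s <= 1 -> U (edge_map w a s) ->
    exists2 e : R, 0 < e &
      forall s' : R, 0 <= s' <= 1 -> `|s' - s| < e -> U (edge_map w a s').

Definition tree_continuous (g : R -> tree) : Prop :=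
  forall U : set tree, tree_open U -> open (g @^-1` U).

Definition embedded_wire (g : R -> tree) : Prop :=
  [/\ injective g, tree_continuous g &
      (* homeomorphism onto its image (with the subspace topology) *)
      forall O : set R, open O ->
        exists2 U : set tree, tree_open U & g @` O = U `&` range g].

End Tree.

Section Diffeology.
Variable R : realType.

Fixpoint iter_dder (n : nat) (vs : seq 'rV[R]_n) (f : 'rV[R]_n -> R)
  : 'rV[R]_n -> R :=
  match vs with
  | [::] => f
  | v :: vs' => fun x => 'D_v (iter_dder vs' f) x
  end.

Definition smooth_on (n : nat) (W : set 'rV[R]_n) (f : 'rV[R]_n -> R) : Prop :=
  forall vs : seq 'rV[R]_n,
    (forall x, W x -> {for x, continuous (iter_dder vs f)}) /\
    (forall (v x : 'rV[R]_n), W x -> derivable (iter_dder vs f) x v).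

(* Plots of the diffeology generated by a family G of maps R -> X:
   P : U -> X (U open in R^n; values of P outside U are irrelevant) is a plot
   iff U has an open cover on each member of which P is constant or of the
   form g o h with g in G and h smooth. *)
Definition gen_plot (X : Type) (G : set (R -> X)) (n : nat)
    (U : set 'rV[R]_n) (P : 'rV[R]_n -> X) : Prop :=
  forall x, U x -> exists W : set 'rV[R]_n,
    [/\ open W, W `<=` U, W x &
      (exists c : X, forall y, W y -> P y = c) \/
      (exists (g : R -> X) (h : 'rV[R]_n -> R),
         [/\ G g, smooth_on W h & forall y, W y -> P y = g (h y)])].

Definition D_open (X : Type)
    (plot : forall n : nat, set 'rV[R]_n -> ('rV[R]_n -> X) -> Prop)
    (S : set X) : Prop :=
  forall (n : nat) (U : set 'rV[R]_n) (P : 'rV[R]_n -> X),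
    open U -> plot n U P -> open (U `&` P @^-1` S).

End Diffeology.

Definition wire_plot (R : realType) (A : finType) :=
  @gen_plot R (tree R A) (@embedded_wire R A).

From HB Require Import structures.
From mathcomp Require Import all_boot all_order all_algebra.
From mathcomp Require Import all_classical all_reals all_analysis.
From mathcomp Require Import zify lra.
Set Implicit Arguments.
Unset Strict Implicit.
Unset Printing Implicit Defensive.

Import Order.TTheory GRing.Theory Num.Theory.
Import numFieldNormedType.Exports.
Local Open Scope classical_set_scope.
Local Open Scope ring_scope.

(* A CW-open set pulls back to an open set along every continuous map, in
   particular along every plot g \o h (a continuous wire after a smooth map),
   so it is D-open.  Conversely, every edge (w, a) of T lies on an embedded
   wire: pick a letter b <> a (this is where |A| >= 2 is used) and run through
   the vertices w, wa, waa, ... at unit speed for positive times and through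
   w, wb, wbb, ... for negative times.  The time can be read back off the
   point, so this line is injective; it is continuous edge by edge; and it is
   a homeomorphism onto its image because any edge not on the line meets it
   at most in an endpoint.  Composed with the coordinate of R^1 it is a plot,
   and restricting the open preimage of a D-open set to the edge (w, a) gives
   the openness condition of the CW topology. *)

Section Coordinate.
Variable R : realType.

Definition coord1 (y : 'rV[R]_1) : R := y ord0 ord0.

Lemma derive_coord1 (v x : 'rV[R]_1) : 'D_v coord1 x = coord1 v.
Proof.
have @f : {linear 'rV[R]_1 -> R}.
  by exists coord1; do 2![eexists]; do ?[constructor];
     rewrite /coord1 ?mxE// => ? *; rewrite ?mxE//; move=> ?; rewrite !mxE.
rewrite (_ : coord1 = f) // deriveE.
  by rewrite diff_lin //; exact: coord_continuous.
exact/linear_differentiable/coord_continuous.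
Qed.

Lemma smooth_coord1 : smooth_on setT coord1.
Proof.
have iter_coord1 vs :
    iter_dder vs coord1 = coord1 \/ exists c, iter_dder vs coord1 = cst c.
  elim: vs => [|v vs [IH|[c IH]]] /=; first by left.
    by right; exists (coord1 v); apply/funext => x; rewrite IH derive_coord1.
  by right; exists 0; apply/funext => x; rewrite IH derive_cst.
move=> vs; case: (iter_coord1 vs) => [->|[c ->]]; split.
- by move=> x _; exact: coord_continuous.
- by move=> v x _; exact/diff_derivable/differentiable_coord.
- by move=> x _; exact: cst_continuous.
- by move=> v x _; exact: derivable_cst.
Qed.

Lemma near_const_mx (O : set 'rV[R]_1) (t : R) : open O -> O (const_mx t) ->
  \forall t' \near t, O (const_mx t').
Proof.
rewrite openE => /[apply] /nbhs_ballP[e e0 He]; apply/nbhs_ballP.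
by exists e => // t' tt'; apply: He; split => // i j; rewrite !mxE.
Qed.

End Coordinate.

Lemma near_unit_interval (R : realType) (s : R) : 0 <= s <= 1 ->
  \forall s' \near s, 0 <= s' <= 1 -> s' = s \/ 0 < s' < 1.
Proof.
move=> /andP[s0 s1].
have interior s' : 0 <= s' <= 1 -> s' != 0 -> s' != 1 -> 0 < s' < 1.
  by move=> /andP[s'0 s'1] n0 n1; rewrite !lt_neqAle s'0 s'1 eq_sym n0 n1.
have [->|sn0] := eqVneq s 0.
  apply: filterS (lt_nbhsl ltr01) => s' s'1 s'01.
  have [->|n0] := eqVneq s' 0; [by left | right].
  by rewrite interior // lt_eqF.
have [->|sn1] := eqVneq s 1.
  apply: filterS (lt_nbhsr ltr01) => s' s'0 s'01.
  have [->|n1] := eqVneq s' 1; [by left | right].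
  by rewrite interior // gt_eqF.
have sp : 0 < s by rewrite lt_neqAle eq_sym sn0.
have sl : s < 1 by rewrite lt_neqAle sn1.
apply: filterS (filterI (lt_nbhsr sp) (lt_nbhsl sl)) => s' [s'0 s'1] _.
by right; rewrite s'0 s'1.
Qed.

Lemma rcons_cat_nseq (T : Type) (s : seq T) m x :
  rcons (s ++ nseq m x) x = s ++ nseq m.+1 x.
Proof. by rewrite -cats1 -catA -[[:: x]]/(nseq 1 x) -nseqD addn1. Qed.

Section Tree.
Variables (R : realType) (A : finType).
Implicit Types (w : seq A) (c : A) (s t : R) (U S : set (tree R A)).

Lemma edge_map_val w c s : 0 < s <= 1 -> val (edge_map w c s) = Pt w c s.
Proof. by move=> s01; rewrite /edge_map; case/andP: (s01) => -> _; rewrite insubdK. Qed.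

Lemma edge_map_le0 w c s : s <= 0 -> edge_map w c s = tvertex R w.
Proof. by rewrite /edge_map leNgt => /negbTE ->. Qed.

Lemma tvertex_rcons w c : val (tvertex R (rcons w c)) = Pt w c 1.
Proof.
by rewrite /tvertex rev_rcons /= revK insubdK //; apply/andP; rewrite ltr01 lexx.
Qed.

Lemma edge_map1 w c : edge_map w c 1 = tvertex R (rcons w c).
Proof. by apply: val_inj; rewrite edge_map_val ?ltr01 ?lexx // tvertex_rcons. Qed.

Lemma tvertex_val_Pt v w' c s : val (tvertex R v) = Pt w' c s -> s = 1.
Proof.
by case/lastP: v => [|v c']; [rewrite /tvertex | rewrite tvertex_rcons; case].
Qed.

Lemma tree_openP U : tree_open U <->
  forall w c s, 0 <= s <= 1 -> U (edge_map w c s) ->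
    \forall s' \near s, 0 <= s' <= 1 -> U (edge_map w c s').
Proof.
split=> oU w c s s01 Us.
  have [e e0 He] := oU w c s s01 Us; apply/nbhs_ballP; exists e => // s' ss'.
  by move=> s'01; apply: He; rewrite // distrC.
have /nbhs_ballP[e e0 He] := oU w c s s01 Us; exists e => // s' s'01 ss'.
by apply: He; rewrite // /ball /= distrC.
Qed.

Section Line.
Variables (w : seq A) (a b : A).
Hypothesis ab : a != b.

Definition ray c t : tree R A :=
  edge_map (w ++ nseq (Num.truncn t) c) c (t - (Num.truncn t)%:R).

Lemma ray_le0 c t : t <= 0 -> ray c t = tvertex R w.
Proof.
move=> t0; have /truncn0Pn t_0 : ~~ (1 <= t) by rewrite -ltNge (le_lt_trans t0).
by rewrite /ray t_0 cats0 subr0 edge_map_le0.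
Qed.

Lemma ray_chart c m t : m%:R <= t <= m.+1%:R ->
  ray c t = edge_map (w ++ nseq m c) c (t - m%:R).
Proof.
move=> /andP[mt tm]; have [lt|ge] := ltP t m.+1%:R.
  by rewrite /ray (@truncn_def _ t m) // mt lt.
have -> : t = m.+1%:R by apply/le_anti; rewrite tm ge.
rewrite /ray natrK subrr edge_map_le0 // -natr1 addrC addKr edge_map1.
by rewrite rcons_cat_nseq.
Qed.

Lemma ray_val c t : 0 <= t ->
  (t = 0 /\ ray c t = tvertex R w) \/
  exists m r, [/\ 0 < r <= 1, t = m%:R + r & val (ray c t) = Pt (w ++ nseq m c) c r].
Proof.
rewrite le_eqVlt => /predU1P[<-|t0]; first by left; rewrite ray_le0.
right; have /andP[mt tm] := truncn_itv (ltW t0); set m := Num.truncn t in mt tm *.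
have [tm'|mlt] := eqVneq t m%:R.
  case: m tm' {mt tm} => [|k] tk; first by move: t0; rewrite tk ltxx.
  exists k, 1; split; first by rewrite ltr01 lexx.
    by rewrite tk -natr1.
  rewrite (@ray_chart c k) tk ?natr1 -?natr1 ?lerDl ?ler01 ?lexx //.
  by rewrite addrC addKr edge_map_val ?ltr01 ?lexx.
have r0 : 0 < t - m%:R by rewrite subr_gt0 lt_neqAle eq_sym mlt mt.
exists m, (t - m%:R); split; first by rewrite r0 lerBlDl natr1 ltW.
  by rewrite addrC subrK.
by rewrite /ray edge_map_val // r0 lerBlDl natr1 ltW.
Qed.

Definition line t := ray (if 0 <= t then a else b) `|t|.

Definition dir c : R := if c == a then 1 else -1.

Lemma line_dir c u : (c == a) || (c == b) -> 0 <= u -> line (dir c * u) = ray c u.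
Proof.
move=> cab u0; rewrite /line /dir; have [->|ca] := eqVneq c a.
  by rewrite mul1r u0 ger0_norm.
move: cab; rewrite (negbTE ca) /= => /eqP->.
rewrite mulN1r normrN ger0_norm // oppr_ge0; case: (leP u 0) => // u_le0.
by rewrite !ray_le0.
Qed.

Definition ray_coord c (x : tpt R A) : R :=
  if x is Pt v c' s then
    let m := (size v - size w)%N in
    if (c' == c) && (v == w ++ nseq m c) then m%:R + s else 0
  else 0.

Lemma ray_coord_Pt c c' m s :
  ray_coord c (Pt (w ++ nseq m c') c' s) = if c' == c then m%:R + s else 0.
Proof. by rewrite /= size_cat size_nseq addKn; case: eqP => // ->; rewrite eqxx. Qed.

Lemma ray_coord_tvertex c : ray_coord c (val (tvertex R w)) = 0.
Proof.
have [Ew|[v [c' Ew]]] : w = [::] \/ exists v c', w = rcons v c'.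
  by case/lastP: (w) => [|v c']; [left | right; exists v, c'].
  by rewrite /ray_coord Ew.
rewrite /ray_coord Ew tvertex_rcons size_rcons (eqP (leqnSn _)) cats0.
have -> : (v == rcons v c') = false.
  by apply/eqP => /(congr1 size); rewrite size_rcons; lia.
by rewrite andbF.
Qed.

Lemma ray_coord_ray c c' u : 0 <= u ->
  ray_coord c (val (ray c' u)) = if c' == c then u else 0.
Proof.
move=> u0; case: (ray_val c' u0) => [[-> ->]|[m [r [_ -> ->]]]].
  by rewrite ray_coord_tvertex; case: ifP.
by rewrite ray_coord_Pt.
Qed.

Definition line_coord (x : tpt R A) : R := ray_coord a x - ray_coord b x.

Lemma line_coordK t : line_coord (val (line t)) = t.
Proof.
have ba : (b == a) = false by rewrite eq_sym (negbTE ab).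
rewrite /line_coord /line; case: ifPn => t0; rewrite !ray_coord_ray // eqxx ?ba.
  by rewrite (negbTE ab) subr0 ger0_norm.
by rewrite sub0r ltr0_norm ?opprK // ltNge.
Qed.

Lemma line_inj : injective line.
Proof. by move=> t1 t2 e; rewrite -(line_coordK t1) -(line_coordK t2) e. Qed.

Lemma ray_chart_near U c m t : tree_open U -> m%:R <= t <= m.+1%:R -> U (ray c t) ->
  \forall t' \near t, m%:R <= t' <= m.+1%:R -> U (ray c t').
Proof.
move=> /tree_openP oU mt; rewrite (ray_chart c mt) => Ut.
have unit (x : R) : m%:R <= x <= m.+1%:R -> 0 <= x - m%:R <= 1.
  by case/andP=> mx xm; rewrite subr_ge0 mx lerBlDl natr1.
have translate : (fun t' => t' - m%:R) @ t --> t - m%:R.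
  by apply: cvgB; [exact: cvg_id | exact: cvg_cst].
have near_edge : \forall t' \near t,
    0 <= t' - m%:R <= 1 -> U (edge_map (w ++ nseq m c) c (t' - m%:R)).
  exact: translate (oU _ _ _ (unit _ mt) Ut).
apply: filterS near_edge => t' Ut' mt'.
by rewrite (ray_chart c mt'); apply: Ut'; exact: unit.
Qed.

Lemma ray_near U c t : tree_open U -> U (ray c t) -> \forall t' \near t, U (ray c t').
Proof.
move=> oU Ut; have [tn|t0] := ltP t 0.
  apply: filterS (lt_nbhsl tn) => t' /ltW t'n.
  by rewrite ray_le0 // -(ray_le0 c (ltW tn)).
have /andP[mt tm] := truncn_itv t0; set m := Num.truncn t in mt tm.
have right : \forall t' \near t, t <= t' -> U (ray c t').
  apply: filterS (filterI (ray_chart_near oU (introT andP (conj mt (ltW tm))) Ut)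
    (lt_nbhsl tm)) => t' [chart t'm] tt'.
  by apply: chart; rewrite (le_trans mt tt') ltW.
have left : \forall t' \near t, t' <= t -> U (ray c t').
  have [mt'|tm'] := ltP m%:R t.
    apply: filterS (filterI (ray_chart_near oU (introT andP (conj mt (ltW tm))) Ut)
      (lt_nbhsr mt')) => t' [chart mt''] t't.
    by apply: chart; rewrite ltW //= (le_trans t't) ?ltW.
  have tE : t = m%:R by apply/le_anti; rewrite tm' mt.
  case: m tE {mt tm tm' right} => [|k] tE.
    move: Ut; rewrite tE ray_le0 // => Uw.
    by apply: filterE => t' t't; rewrite ray_le0 //.
  have kt : k%:R <= t <= k.+1%:R by rewrite tE -natr1 lerDl ler01 lexx.
  have kt' : k%:R < t by rewrite tE ltr_nat.
  apply: filterS (filterI (ray_chart_near oU kt Ut) (lt_nbhsr kt')) => t' [chart kt''] t't.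
  by apply: chart; rewrite ltW //= (le_trans t't) // tE.
apply: filterS (filterI left right) => t' [l r].
by have [/r|/ltW/l] := leP t t'.
Qed.

Lemma line_near U t : tree_open U -> U (line t) -> \forall t' \near t, U (line t').
Proof.
move=> oU; have [tn|tp|->] := ltgtP t 0.
- rewrite /line leNgt tn /= ltr0_norm // => Ub.
  have Nb : \forall t' \near t, U (ray b (- t')).
    by apply/(nearN t (U \o ray b)); exact: ray_near oU Ub.
  near=> t'; have t'n : t' < 0 by near: t'; exact: lt_nbhsl.
  by rewrite /line leNgt t'n /= ltr0_norm //; near: t'.
- rewrite /line ltW //= gtr0_norm // => /(ray_near oU) Na.
  near=> t'; have t'p : 0 < t' by near: t'; exact: lt_nbhsr.
  by rewrite /line ltW //= gtr0_norm //; near: t'.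
rewrite /line lexx normr0 => Ua0.
have Na := ray_near oU Ua0.
have Nb : \forall t' \near 0, U (ray b (- t')).
  apply/(nearN 0 (U \o ray b)); rewrite oppr0; apply: ray_near oU _.
  by rewrite ray_le0 // -(ray_le0 a (lexx 0)).
near=> t'; rewrite /line; case: ifPn => t'0.
  by rewrite ger0_norm //; near: t'.
by rewrite ltr0_norm ?ltNge //; near: t'.
Unshelve. all: by end_near.
Qed.

Lemma ray_edge c u w' c' s : 0 <= u -> s < 1 -> val (ray c u) = Pt w' c' s ->
  c' = c /\ exists m, w' = w ++ nseq m c.
Proof.
move=> u0 s1; case: (ray_val c u0) => [[_ ->] /tvertex_val_Pt s_1|[m [r [_ _ ->]]]].
  by move: s1; rewrite s_1 ltxx.
by case=> <- <- _; split; last exists m.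
Qed.

Lemma edge_on_ray c m s : 0 <= s <= 1 ->
  edge_map (w ++ nseq m c) c s = ray c (m%:R + s).
Proof.
case/andP=> s0 s1; rewrite (@ray_chart c m) (addrC m%:R) ?addrK //.
by rewrite -natr1; apply/andP; split; lra.
Qed.

Lemma edge_line_cases w' c' :
  (exists2 phi : R -> R, continuous phi &
     forall s, 0 <= s <= 1 -> edge_map w' c' s = line (phi s)) \/
  (forall s, 0 < s < 1 -> ~ range line (edge_map w' c' s)).
Proof.
have [[m [cab ->]]|off] :=
  pselect (exists m, ((c' == a) || (c' == b)) /\ w' = w ++ nseq m c').
  left; exists (fun s => dir c' * (m%:R + s)).
    move=> s; apply: cvgM; first exact: cvg_cst.
    by apply: cvgD; [exact: cvg_cst | exact: cvg_id].
  move=> s s01; rewrite line_dir ?addr_ge0 //; first exact: edge_on_ray.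
  by case/andP: s01.
right=> s /andP[s0 s1] [t _ /(congr1 val)].
rewrite edge_map_val ?s0 ?ltW // => /(ray_edge (normr_ge0 t) s1)[c'E [m w'E]].
by apply: off; exists m; rewrite c'E w'E; split=> //; case: ifP; rewrite eqxx ?orbT.
Qed.

Lemma line_embedded : embedded_wire line.
Proof.
split; first exact: line_inj.
  by move=> U oU; rewrite openE => t; exact: line_near.
move=> O oO; exists (line @` O `|` ~` range line); last first.
  apply/seteqP; split=> [x [t Ot <-]|x [[//|nr] rt]]; last by case: nr.
  by split; [left; exists t | exists t].
apply/tree_openP => w' c' s s01 Us.
case: (edge_line_cases w' c') => [[phi phic phiE]|off].
  have Ophi : O (phi s).
    move: Us; rewrite phiE // => -[[t Ot /line_inj <-]//|]; by case; exists (phi s).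
  have Nphi : \forall s' \near s, O (phi s').
    exact: phic s _ (open_nbhs_nbhs (conj oO Ophi)).
  apply: filterS Nphi => s' Os' s'01.
  by rewrite phiE //; left; exists (phi s').
apply: filterS (near_unit_interval s01) => s' /[apply] [[->//|/off]].
by right.
Qed.

End Line.

Lemma tree_open_D_open S : tree_open S -> D_open (@wire_plot R A) S.
Proof.
move=> oS n U P oU plotP; rewrite openE => x [Ux Sx].
have [W [oW WU Wx plotW]] := plotP x Ux.
have NW : \forall y \near x, W y := open_nbhs_nbhs (conj oW Wx).
case: plotW => [[c Pc]|[g [h [[_ gc _] hs Ph]]]].
  apply: filterS NW => y Wy; split; first exact: WU.
  by rewrite /= Pc // -(Pc x Wx).
have Sh : \forall y \near x, S (g (h y)).
  have Sgh : nbhs (h x) (g @^-1` S).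
    by apply: open_nbhs_nbhs; split; [exact: gc | rewrite /= -Ph].
  exact: (hs [::]).1 x Wx _ Sgh.
apply: filterS (filterI NW Sh) => y [Wy Sy]; split; [exact: WU | by rewrite /= Ph].
Qed.

Lemma D_open_tree_open S : (1 < #|A|)%N -> D_open (@wire_plot R A) S -> tree_open S.
Proof.
move=> hA DS; apply/tree_openP => w a s s01 Ss.
have [b ab] : exists b, a != b.
  case: (pickP (predC1 a)) => [b hb|h]; first by exists b; rewrite eq_sym.
  by have := eq_card0 h; rewrite cardC1; move: hA; clear; lia.
have edge_line s' : 0 <= s' <= 1 -> edge_map w a s' = line w a b s'.
  move=> s01'; have := edge_on_ray w a 0 s01'; rewrite cats0 add0r => ->.
  by rewrite /line (andP s01').1 ger0_norm // (andP s01').1.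
have plot : wire_plot setT (line w a b \o @coord1 R).
  move=> y _; exists setT; split=> //; first exact: openT.
  right; exists (line w a b), (@coord1 R).
  by split=> //; [exact: line_embedded | exact: smooth_coord1].
have coord1_const t : coord1 (const_mx t : 'rV[R]_1) = t by rewrite /coord1 mxE.
have := @near_const_mx R _ s (DS _ _ _ openT plot).
rewrite /= coord1_const -edge_line // => /(_ (conj I Ss)).
by apply: filterS => s' [_]; rewrite /= coord1_const => /[swap] /edge_line ->.
Qed.

End Tree.

Local Close Scope ring_scope.

Theorem mainTheorem1 (R : realType) (A : finType) (hA : 1 < #|A|)
    (S : set (tree R A)) :
  D_open (@wire_plot R A) S <-> tree_open S.
Proof. by split; [exact: D_open_tree_open | exact: tree_open_D_open]. Qed.
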